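(* Let $n\ge2$ and let $\boldsymbol x^*$ be a pure Nash equilibrium of $\mathcal L(n,S)$. If player $i$ is $\boldsymbol x^*$-balanced, then \[ \rho_i(\boldsymbol x^* )\le\rho_j(\boldsymbol x^* )\quad\text{for all } j\in N. \]
   Context: Network: $(V,E)$ is a finite connected graph with no vertex of degree $2$; each edge $e$ has a length $\lambda(e)>0$. $S$ is the metric measure space obtained by identifying each edge with a segment of length $\lambda(e)$, with length measure $\lambda$ and shortest-path distance $d$. Vertices have their graph degree, and points in the interior of an edge have degree $2$. Location game $\mathcal L(n,S)$ with player set $N=\{1,\dots,n\}$: each player chooses a point of $S$. Consumers are distributed according to $\lambda$, and each shops at a closest occupied location. Consumers equidistant from several closest occupied locations are split equally among those locations, and the share of a location is split equally among the players located there. The payoff $\rho_i(\boldsymbol x)$ is the mass of consumers attracted by player $i$. Nash equilibria are pure. For a profile $\boldsymbol x$ and $w\in S$: if $\operatorname{card}\{i: x_i=w\}=\operatorname{degree}(w)$, then every player located at $w$ is called $\boldsymbol x$-balanced and $w$ is called $\boldsymbol x$-saturated. *)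

From HB Require Import structures.
From mathcomp Require Import all_boot.
From Stdlib Require Import Reals ClassicalEpsilon.
Set Implicit Arguments. Unset Strict Implicit. Unset Printing Implicit Defensive.

Local Open Scope R_scope.

(* A point of S is either a vertex, or an interior point of an edge [e],
   given by its distance [t] (0 < t < len e) from the endpoint [src e]. *)
Inductive point (V E : Type) := PV of V | PE of E & R.
Arguments PV {V E}. Arguments PE {V E}.

Section Net.
Context {V E : finType} (src tgt : E -> V) (len : E -> R).

Definition point_eqb (p q : point V E) : bool :=
  match p, q with
  | PV u, PV v => u == v
  | PE e t, PE f s => (e == f) && (if Req_EM_T t s then true else false)
  | _, _ => false
  end.

Lemma point_eqbP : Equality.axiom point_eqb.
Proof.
move=> [u|e t] [v|f s] /=; try by constructor.
- by apply: (iffP eqP) => [->|[]].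
- case: (Req_EM_T t s) => [ts|ne]; rewrite ?andbT ?andbF.
  + by subst s; apply: (iffP eqP) => [->|[]].
  + by constructor => -[].
Qed.

End Net.

HB.instance Definition _ (V E : finType) :=
  hasDecEq.Build (point V E) (@point_eqbP V E).

Section Game.
Context {V E : finType} (src tgt : E -> V) (len : E -> R).

Inductive walk : V -> V -> seq E -> Prop :=
| walk_nil v : walk v v [::]
| walk_fwd e u s : walk (tgt e) u s -> walk (src e) u (e :: s)
| walk_bwd e u s : walk (src e) u s -> walk (tgt e) u (e :: s).

Definition wlen (s : seq E) : R := foldr (fun e r => len e + r) 0 s.

Definition connected : Prop := forall u v, exists s, walk u v s.

Definition dV (u v : V) : R :=
  epsilon (inhabits 0)
    (fun r => (exists s, walk u v s /\ wlen s = r) /\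
              (forall s, walk u v s -> r <= wlen s)).

(* shortest-path distance d on S *)
Definition dist (p q : point V E) : R :=
  match p, q with
  | PV u, PV v => dV u v
  | PV u, PE f s => Rmin (dV u (src f) + s) (dV u (tgt f) + (len f - s))
  | PE e t, PV v => Rmin (t + dV (src e) v) ((len e - t) + dV (tgt e) v)
  | PE e t, PE f s =>
      let m := Rmin
        (Rmin (t + dV (src e) (src f) + s)
              (t + dV (src e) (tgt f) + (len f - s)))
        (Rmin ((len e - t) + dV (tgt e) (src f) + s)
              ((len e - t) + dV (tgt e) (tgt f) + (len f - s))) in
      if e == f then Rmin (Rabs (t - s)) m else m
  end.

Definition valid_point (p : point V E) : Prop :=
  match p with PV _ => True | PE e t => 0 < t < len e end.

Definition vdeg (v : V) : nat := #|[pred e : E | (src e == v) || (tgt e == v)]|.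
Definition degree (p : point V E) : nat :=
  match p with PV v => vdeg v | PE _ _ => 2%nat end.

Definition pt_on (e : E) (t : R) : point V E :=
  if Req_EM_T t 0 then PV (src e)
  else if Req_EM_T t (len e) then PV (tgt e) else PE e t.

Definition Rleb (a b : R) : bool := if Rle_dec a b then true else false.

Variable n : nat.
Implicit Types (x : 'I_n -> point V E) (z : point V E) (i j : 'I_n).

Definition closest x z j : bool := [forall k, Rleb (dist z (x j)) (dist z (x k))].

Definition closest_locs x z : seq (point V E) :=
  undup [seq x j | j <- enum 'I_n & closest x z j].

Definition nb_at x (w : point V E) : nat := #|[pred j | x j == w]|.

Definition share x i z : R :=
  if closest x z i then / INR (size (closest_locs x z)) * / INR (nb_at x (x i))
  else 0.

(* Riemann integral (value of the integral whenever f is integrable) *)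
Definition RInt (f : R -> R) (a b : R) : R :=
  epsilon (inhabits 0)
    (fun r => exists pr : Riemann_integrable f a b, RiemannInt pr = r).

Definition payoff x i : R :=
  \big[Rplus/0]_(e : E) RInt (fun t => share x i (pt_on e t)) 0 (len e).

Definition upd x i (y : point V E) : 'I_n -> point V E :=
  fun j => if j == i then y else x j.

Definition valid_profile x : Prop := forall j, valid_point (x j).

Definition nash x : Prop :=
  valid_profile x /\
  forall i y, valid_point y -> payoff (upd x i y) i <= payoff x i.

Definition balanced x i : Prop := nb_at x (x i) = degree (x i).

End Game.

Definition network {V E : finType} (src tgt : E -> V) (len : E -> R) : Prop :=
  (forall e, 0 < len e) /\
  (forall e, src e <> tgt e) /\
  (forall e f, ((src e = src f /\ tgt e = tgt f) \/ (src e = tgt f /\ tgt e = src f)) -> e = f) /\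
  connected src tgt /\
  (forall v, vdeg src tgt v <> 2%nat).

From Pilot Require Import Defs.
From HB Require Import structures.
From mathcomp Require Import all_boot.
From Stdlib Require Import Reals Lra Lia ClassicalEpsilon Classical FunctionalExtensionality.
Set Implicit Arguments. Unset Strict Implicit. Unset Printing Implicit Defensive.
Local Open Scope R_scope.

(* Let [d] be the degree of [x i], which is also the number of players at
   [x i].  Any player [j] may move to one of the [d] points at a small distance
   [eps] from [x i], one in each direction.  A consumer served by [i] and farther
   than [eps] from [x i] is, for one of these points, strictly closer to it than
   to every occupied location, so [j] alone captures that consumer after the
   deviation, while [i] gets at most [1/d] of it.  Integrating,
   [d * rho_i <= sum of the d deviation payoffs of j + O(eps) <= d * rho_j + O(eps)]
   by the equilibrium property, where [O(eps)] accounts for the consumers within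
   [eps] of [x i].  Letting [eps] go to [0] gives [rho_i <= rho_j]. *)

(** * Sums and Riemann integrals *)

Lemma Rplus_associative : associative Rplus.
Proof. by move=> a b c; rewrite Rplus_assoc. Qed.

HB.instance Definition _ :=
  Monoid.isComLaw.Build R 0 Rplus Rplus_associative Rplus_comm Rplus_0_l.
HB.instance Definition _ := Monoid.isMulLaw.Build R 0 Rmult Rmult_0_l Rmult_0_r.
HB.instance Definition _ :=
  Monoid.isAddLaw.Build R Rmult Rplus Rmult_plus_distr_r Rmult_plus_distr_l.

Section RealSums.
Variable I : Type.
Implicit Types (r : seq I) (F G : I -> R).

Lemma sumR_const r c : \big[Rplus/0]_(i <- r) c = INR (size r) * c.
Proof.
elim: r => [|a r IH]; first by rewrite big_nil /=; ring.
by rewrite big_cons IH (S_INR (size r)); ring.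
Qed.

Lemma sumR_le r (P : pred I) F G : (forall i, P i -> F i <= G i) ->
  \big[Rplus/0]_(i <- r | P i) F i <= \big[Rplus/0]_(i <- r | P i) G i.
Proof. by move=> FG; elim/big_ind2: _ => // *; [lra | exact: Rplus_le_compat]. Qed.

Lemma sumR_ge0 r F : (forall i, 0 <= F i) -> 0 <= \big[Rplus/0]_(i <- r) F i.
Proof. by move=> F0; elim/big_ind: _ => // *; [lra | exact: Rplus_le_le_0_compat]. Qed.

End RealSums.

Lemma sumR_ge_mem (T : eqType) (r : seq T) (F : T -> R) y :
  (forall i, 0 <= F i) -> y \in r -> F y <= \big[Rplus/0]_(i <- r) F i.
Proof.
move=> F0 yr; rewrite (big_rem _ yr) /=.
have := sumR_ge0 (rem y r) F0; lra.
Qed.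

Definition integrable f a b : Prop := inhabited (Riemann_integrable f a b).

Lemma RInt_RiemannInt f a b (pr : Riemann_integrable f a b) :
  RInt f a b = RiemannInt pr.
Proof.
have ex : exists r, exists pr : Riemann_integrable f a b, RiemannInt pr = r.
  by exists (RiemannInt pr), pr.
rewrite /RInt; have [pr' <-] := epsilon_spec (inhabits 0) _ ex.
exact: RiemannInt_P5.
Qed.

Lemma integrable_const c a b : integrable (fun _ => c) a b.
Proof. exact: inhabits (RiemannInt_P14 a b c). Qed.

Lemma integrable_plus f g a b : integrable f a b -> integrable g a b ->
  integrable (fun t => f t + g t) a b.
Proof.
move=> [pf] [pg]; constructor.
by apply: Riemann_integrable_ext (RiemannInt_P10 1 pf pg) => t _; ring.
Qed.

Lemma integrable_scal c f a b : integrable f a b -> integrable (fun t => c * f t) a b.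
Proof. by move=> [pf]; constructor; exact: Riemann_integrable_scal. Qed.

Lemma integrable_sum (T : Type) (r : seq T) (F : T -> R -> R) a b :
  (forall y, integrable (F y) a b) ->
  integrable (fun t => \big[Rplus/0]_(y <- r) F y t) a b.
Proof.
move=> IF; elim: r => [|y r IH].
  by under [fun t => _]functional_extensionality do rewrite big_nil; exact: integrable_const.
under [fun t => _]functional_extensionality do rewrite big_cons.
exact: integrable_plus.
Qed.

Lemma integrable_Chasles f a b c : integrable f a b -> integrable f b c -> integrable f a c.
Proof. by move=> [p1] [p2]; exact: inhabits (RiemannInt_P24 p1 p2). Qed.

Lemma RInt_const c a b : RInt (fun _ => c) a b = c * (b - a).
Proof. by rewrite (RInt_RiemannInt (RiemannInt_P14 a b c)) RiemannInt_P15. Qed.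

Lemma RInt_le f g a b : a <= b -> integrable f a b -> integrable g a b ->
  (forall t, a < t < b -> f t <= g t) -> RInt f a b <= RInt g a b.
Proof.
move=> ab [pf] [pg] fg; rewrite (RInt_RiemannInt pf) (RInt_RiemannInt pg).
exact: RiemannInt_P19.
Qed.

Lemma RInt_le_const f a b u : a <= b -> integrable f a b ->
  (forall t, a < t < b -> f t <= u) -> RInt f a b <= u * (b - a).
Proof. by move=> ab If fu; rewrite -RInt_const; apply: RInt_le => //; exact: integrable_const. Qed.

Lemma RInt_plus f g a b : integrable f a b -> integrable g a b ->
  RInt (fun t => f t + g t) a b = RInt f a b + RInt g a b.
Proof.
move=> [pf] [pg]; have pfg := RiemannInt_P10 1 pf pg.
have -> : (fun t => f t + g t) = (fun t => f t + 1 * g t).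
  by apply: functional_extensionality => t; ring.
rewrite (RInt_RiemannInt pfg) (RInt_RiemannInt pf) (RInt_RiemannInt pg).
rewrite (RiemannInt_P13 pf pg pfg); ring.
Qed.

Lemma RInt_scal c f a b : integrable f a b -> RInt (fun t => c * f t) a b = c * RInt f a b.
Proof.
move=> [pf]; have p0 := RiemannInt_P14 a b 0; have pr := RiemannInt_P10 c p0 pf.
have -> : (fun t => c * f t) = (fun t => fct_cte 0 t + c * f t).
  by apply: functional_extensionality => t; rewrite /fct_cte; ring.
rewrite (RInt_RiemannInt pr) (RInt_RiemannInt pf) (RiemannInt_P13 p0 pf pr).
rewrite RiemannInt_P15; ring.
Qed.

Lemma RInt_sum (T : Type) (r : seq T) (F : T -> R -> R) a b :
  (forall y, integrable (F y) a b) ->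
  RInt (fun t => \big[Rplus/0]_(y <- r) F y t) a b = \big[Rplus/0]_(y <- r) RInt (F y) a b.
Proof.
move=> IF; elim: r => [|y r IH].
  by under [fun t => _]functional_extensionality do rewrite big_nil; rewrite RInt_const big_nil; ring.
under [fun t => _]functional_extensionality do rewrite big_cons.
by rewrite RInt_plus ?IH ?big_cons //; exact: integrable_sum.
Qed.

Lemma RInt_Chasles f a b c : a <= b <= c -> integrable f a c ->
  [/\ integrable f a b, integrable f b c & RInt f a c = RInt f a b + RInt f b c].
Proof.
move=> abc [p]; have p1 := RiemannInt_P22 p abc; have p2 := RiemannInt_P23 p abc.
split; [exact: inhabits p1 | exact: inhabits p2 |].
by rewrite (RInt_RiemannInt p) (RInt_RiemannInt p1) (RInt_RiemannInt p2) (RiemannInt_P26 p1 p2 p).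
Qed.

Lemma RInt_le_window f a b lo hi M : a <= b -> lo <= hi -> 0 <= M ->
  integrable f a b -> (forall t, a < t < b -> f t <= M) ->
  (forall t, a < t < b -> t < lo \/ hi < t -> f t <= 0) ->
  RInt f a b <= M * (hi - lo).
Proof.
move=> ab lohi M0 If fM f0.
pose clamp y := Rmax a (Rmin b y).
have clamp_in y : a <= clamp y <= b by rewrite /clamp /Rmax /Rmin; do 2 case: Rle_dec; lra.
have [hu hv] := (clamp_in lo, clamp_in hi).
set u := clamp lo in hu *; set v := clamp hi in hv *.
have uv : u <= v by rewrite /u /v /clamp /Rmax /Rmin; do 4 case: Rle_dec; lra.
have vu : v - u <= hi - lo by rewrite /u /v /clamp /Rmax /Rmin; do 4 case: Rle_dec; lra.
have [Iau Iub ->] := @RInt_Chasles f a u b hu If.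
have [Iuv Ivb ->] := @RInt_Chasles f u v b (conj uv (proj2 hv)) Iub.
have left : RInt f a u <= 0 * (u - a).
  apply: RInt_le_const => [||t ht]; [lra | done | apply: f0; first lra].
  by left; move: ht; rewrite /u /clamp /Rmax /Rmin; do 2 case: Rle_dec; lra.
have mid : RInt f u v <= M * (v - u) by apply: RInt_le_const => // t ht; apply: fM; lra.
have right : RInt f v b <= 0 * (b - v).
  apply: RInt_le_const => [||t ht]; [lra | done | apply: f0; first lra].
  by right; move: ht; rewrite /v /clamp /Rmax /Rmin; do 2 case: Rle_dec; lra.
have : M * (v - u) <= M * (hi - lo) by apply: Rmult_le_compat_l.
lra.
Qed.

(** * Piecewise constant functions *)

Definition piecewise_const {T} (a b : R) (P : seq R) (f : R -> T) : Prop :=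
  forall t1 t2, a < t1 -> t1 <= t2 -> t2 < b ->
    (forall p, List.In p P -> p < t1 \/ t2 < p) -> f t1 = f t2.

Section PiecewiseConst.
Variables (a b : R).

Lemma piecewise_const_incl {T} P Q (f : R -> T) :
  (forall p, List.In p P -> List.In p Q) ->
  piecewise_const a b P f -> piecewise_const a b Q f.
Proof. by move=> PQ fP t1 t2 ? ? ? Q12; apply: fP => // p /PQ; exact: Q12. Qed.

Lemma piecewise_const_ext {T} P (f g : R -> T) : (forall t, a < t < b -> f t = g t) ->
  piecewise_const a b P g -> piecewise_const a b P f.
Proof. by move=> fg gP t1 t2 ? ? ? ?; rewrite !fg; [exact: gP | lra | lra]. Qed.

Lemma piecewise_const_map {T U} P (f : R -> T) (F : T -> U) :
  piecewise_const a b P f -> piecewise_const a b P (fun t => F (f t)).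
Proof. by move=> fP t1 t2 ? ? ? ?; rewrite (fP t1 t2). Qed.

Lemma piecewise_const_map2 {T U W} P Q (f : R -> T) (g : R -> U) (F : T -> U -> W) :
  piecewise_const a b P f -> piecewise_const a b Q g ->
  piecewise_const a b (P ++ Q)%list (fun t => F (f t) (g t)).
Proof.
move=> fP gQ t1 t2 ? ? ? PQ12.
by rewrite (fP t1 t2) ?(gQ t1 t2) // => p ?; apply: PQ12; apply: List.in_or_app; tauto.
Qed.

Lemma piecewise_const_family (A : finType) {T} (f : A -> R -> T) :
  (forall y, exists P, piecewise_const a b P (f y)) ->
  exists P, piecewise_const a b P (fun t y => f y t).
Proof.
move=> fP; suff [P PP] : exists P, forall y, y \in enum A -> piecewise_const a b P (f y).
  by exists P => t1 t2 ? ? ? ?; apply: functional_extensionality => y; apply: PP; rewrite ?mem_enum.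
elim: (enum A) => [|y r [Q fQ]]; first by exists nil.
have [P fyP] := fP y; exists (P ++ Q)%list => z; rewrite in_cons => /predU1P [->|zr].
  by apply: piecewise_const_incl fyP => p ?; apply: List.in_or_app; left.
by apply: piecewise_const_incl (fQ z zr) => p ?; apply: List.in_or_app; right.
Qed.

End PiecewiseConst.

Lemma piecewise_const_subinterval {T} a b a' b' P (f : R -> T) : a <= a' -> b' <= b ->
  piecewise_const a b P f -> piecewise_const a' b' P f.
Proof. by move=> ? ? fP t1 t2 ? ? ? ?; apply: fP => //; lra. Qed.

Lemma piecewise_const_behead {T} a b p P (f : R -> T) : p <= a \/ b <= p ->
  piecewise_const a b (p :: P) f -> piecewise_const a b P f.
Proof. by move=> pab fP t1 t2 ? ? ? P12; apply: fP => // q [<-|/P12]; [lra|]. Qed.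

Lemma integrable_const_interior f a b c : a <= b -> (forall t, a < t < b -> f t = c) ->
  integrable f a b.
Proof.
move=> ab fc; have [<-|lt] := Req_dec a b; first exact: inhabits (RiemannInt_P7 f a).
have step : adapted_couple f a b [:: a; b] [:: c].
  rewrite /adapted_couple /Rmin /Rmax.
  case: Rle_dec => // _; split => [i /= i0|]; first by have -> : i = O by lia; simpl; lra.
  split => //; split => //; split => // i /= i0; have -> : i = O by lia.
  by move=> t; exact: fc.
have sf : IsStepFun f a b by exists [:: a; b]; exists [:: c].
constructor => eps; exists (mkStepFun sf), (mkStepFun (StepFun_P4 a b 0)); split.
- by move=> t _ /=; rewrite /fct_cte Rminus_diag Rabs_R0; lra.
- rewrite StepFun_P18 Rmult_0_l Rabs_R0; exact: cond_pos.
Qed.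

Lemma piecewise_const_integrable f a b P : a <= b -> piecewise_const a b P f ->
  integrable f a b.
Proof.
elim: P a b => [|p P IH] a b ab fP.
  apply: (@integrable_const_interior _ _ _ (f ((a + b) / 2))) => // t ht.
  by case: (Rle_dec t ((a + b) / 2)) => ?; [|symmetry]; apply: fP => //; lra.
have [pab|] := classic (a < p < b); last first.
  by move=> out; apply: IH (piecewise_const_behead _ fP) => //; lra.
apply: (@integrable_Chasles _ a p b); apply: IH; try lra.
- by apply: piecewise_const_behead (piecewise_const_subinterval _ _ fP); lra.
- by apply: piecewise_const_behead (piecewise_const_subinterval _ _ fP); lra.
Qed.

Lemma RlebP u v : reflect (u <= v) (Rleb u v).
Proof. by rewrite /Rleb; case: Rle_dec => ?; constructor. Qed.

Lemma Rleb_minl u v w : Rleb (Rmin u v) w = Rleb u w || Rleb v w.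
Proof. by rewrite /Rleb /Rmin; do 3 case: Rle_dec => //=; lra. Qed.

Lemma Rleb_maxl u v w : Rleb (Rmax u v) w = Rleb u w && Rleb v w.
Proof. by rewrite /Rleb /Rmax; do 3 case: Rle_dec => //=; lra. Qed.

Lemma Rleb_minr u v w : Rleb w (Rmin u v) = Rleb w u && Rleb w v.
Proof. by rewrite /Rleb /Rmin; do 3 case: Rle_dec => //=; lra. Qed.

Lemma Rleb_maxr u v w : Rleb w (Rmax u v) = Rleb w u || Rleb w v.
Proof. by rewrite /Rleb /Rmax; do 3 case: Rle_dec => //=; lra. Qed.

Inductive minmax_affine : (R -> R) -> Prop :=
| minmax_affine_affine al be : minmax_affine (fun t => al * t + be)
| minmax_affine_min f g : minmax_affine f -> minmax_affine g ->
    minmax_affine (fun t => Rmin (f t) (g t))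
| minmax_affine_max f g : minmax_affine f -> minmax_affine g ->
    minmax_affine (fun t => Rmax (f t) (g t)).

Lemma minmax_affine_ext f g : (forall t, f t = g t) -> minmax_affine f -> minmax_affine g.
Proof. by move=> fg; rewrite (functional_extensionality f g fg). Qed.

Lemma minmax_affine_of_affine al be g : (forall t, al * t + be = g t) -> minmax_affine g.
Proof. by move=> fg; apply: minmax_affine_ext fg (minmax_affine_affine al be). Qed.

Lemma minmax_affine_abs c : minmax_affine (fun t => Rabs (t - c)).
Proof.
apply: minmax_affine_ext (minmax_affine_max (minmax_affine_affine 1 (- c))
                                            (minmax_affine_affine (-1) c)) => t.
by rewrite /Rabs /Rmax; case: Rcase_abs; case: Rle_dec; lra.
Qed.

Section Comparison.
Variables (a b : R).

(* The only possible breakpoint is where the two lines cross. *)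
Lemma Rleb_affine_piecewise_const a1 b1 a2 b2 :
  exists P, piecewise_const a b P (fun t => Rleb (a1 * t + b1) (a2 * t + b2)).
Proof.
have [<-|ne] := Req_dec a1 a2.
  by exists nil => t1 t2 _ _ _ _ /=; rewrite /Rleb; do 2 case: Rle_dec => ? //=; lra.
pose r := (b2 - b1) / (a1 - a2).
have lin t : a1 * t + b1 - (a2 * t + b2) = (a1 - a2) * (t - r) by rewrite /r; field; lra.
exists [:: r] => t1 t2 _ t12 _ /(_ r (or_introl erefl)) side /=.
have same_sign : 0 < ((a1 - a2) * (t1 - r)) * ((a1 - a2) * (t2 - r)).
  have : 0 < (t1 - r) * (t2 - r) by case: side => ?; nra.
  have : 0 < (a1 - a2) * (a1 - a2) by nra.
  nra.
move: same_sign; rewrite -!lin /Rleb; do 2 case: Rle_dec => ? //=; nra.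
Qed.

Lemma Rleb_minmax_affine_piecewise_const f g : minmax_affine f -> minmax_affine g ->
  exists P, piecewise_const a b P (fun t => Rleb (f t) (g t)).
Proof.
move=> mf mg; elim: mf g mg => [a1 b1|f1 f2 _ IH1 _ IH2|f1 f2 _ IH1 _ IH2] g mg.
- elim: mg => [a2 b2|g1 g2 _ [P1 H1] _ [P2 H2]|g1 g2 _ [P1 H1] _ [P2 H2]].
  + exact: Rleb_affine_piecewise_const.
  + exists (P1 ++ P2)%list; apply: piecewise_const_ext (piecewise_const_map2 andb H1 H2).
    by move=> t _; rewrite Rleb_minr.
  + exists (P1 ++ P2)%list; apply: piecewise_const_ext (piecewise_const_map2 orb H1 H2).
    by move=> t _; rewrite Rleb_maxr.
- have [[P1 H1] [P2 H2]] := (IH1 g mg, IH2 g mg).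
  exists (P1 ++ P2)%list; apply: piecewise_const_ext (piecewise_const_map2 orb H1 H2).
  by move=> t _; rewrite Rleb_minl.
- have [[P1 H1] [P2 H2]] := (IH1 g mg, IH2 g mg).
  exists (P1 ++ P2)%list; apply: piecewise_const_ext (piecewise_const_map2 andb H1 H2).
  by move=> t _; rewrite Rleb_maxl.
Qed.

End Comparison.

(** * Shortest walks *)

Lemma seq_argmin (T : eqType) (l : seq T) (P : T -> Prop) (F : T -> R) :
  (exists2 s, s \in l & P s) ->
  exists m, [/\ m \in l, P m & forall s, s \in l -> P s -> F m <= F s].
Proof.
elim: l => [[//]|a l IH] exPl.
have [/IH [m [ml Pm minm]]|noPl] := classic (exists2 s, s \in l & P s).
- have [[Pa le_am]|not_a] := classic (P a /\ F a <= F m).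
  + exists a; split => [||s /predU1P [-> //|sl Ps]]; rewrite ?mem_head //; first lra.
    exact: Rle_trans le_am (minm s sl Ps).
  + exists m; split => [||s /predU1P [-> Pa|sl Ps]]; rewrite ?in_cons ?ml ?orbT //.
      by apply: Rlt_le; apply: Rnot_le_lt => le_am; apply: not_a.
    exact: minm.
- have Pa : P a by case: exPl => s /predU1P [<- //|sl Ps]; case: noPl; exists s.
  exists a; split => [||s /predU1P [-> _|sl Ps]]; rewrite ?mem_head //; first lra.
  by case: noPl; exists s.
Qed.

Section ShortestWalks.
Variables (V E : finType) (src tgt : E -> V) (len : E -> R).
Hypothesis len_pos : forall e, 0 < len e.
Hypothesis conn : connected src tgt.

Local Notation walk := (walk src tgt).
Local Notation wlen := (wlen len).
Local Notation dV := (dV src tgt len).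

Lemma wlen_ge0 s : 0 <= wlen s.
Proof. by elim: s => [|e s IH] /=; [lra | have := len_pos e; lra]. Qed.

Lemma wlen_rcons s f : wlen (rcons s f) = wlen s + len f.
Proof. by elim: s => [|e s IH] /=; rewrite ?IH; ring. Qed.

Lemma walk_rcons_inv u v s : walk u v s -> s <> [::] ->
  exists s' f, s = rcons s' f /\
    (walk u (src f) s' /\ tgt f = v \/ walk u (tgt f) s' /\ src f = v).
Proof.
elim=> {u v s} [//|e u s w IH _|e u s w IH _];
  (case: s w IH => [|a s] w IH; [inversion w; exists [::], e | ]).
- by split => //; left; split => //; exact: walk_nil.
- have [s' [f [-> [[w' <-]|[w' <-]]]]] := IH ltac:(by []); exists (e :: s'), f.
  + by split => //; left; split => //; exact: walk_fwd.
  + by split => //; right; split => //; exact: walk_fwd.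
- by split => //; right; split => //; exact: walk_nil.
- have [s' [f [-> [[w' <-]|[w' <-]]]]] := IH ltac:(by []); exists (e :: s'), f.
  + by split => //; left; split => //; exact: walk_bwd.
  + by split => //; right; split => //; exact: walk_bwd.
Qed.

Fixpoint seqs_upto (k : nat) : seq (seq E) :=
  if k is k'.+1 then [::] :: [seq e :: s | e <- enum E, s <- seqs_upto k'] else [:: [::]].

Lemma mem_seqs_upto k s : (size s <= k)%nat -> s \in seqs_upto k.
Proof.
elim: k s => [|k IH] [|e s] //= size_s; rewrite in_cons /=.
by apply: allpairs_f; [rewrite mem_enum | exact: IH].
Qed.

Lemma len_lower_bound : exists2 m, 0 < m & forall e, m <= len e.
Proof.
suff [m m0 le_m] : exists2 m, 0 < m & forall e, e \in enum E -> m <= len e.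
  by exists m => // e; apply: le_m; rewrite mem_enum.
elim: (enum E) => [|e r [m m0 le_m]]; first by exists 1; first lra.
exists (Rmin m (len e)); first exact: Rmin_glb_lt.
move=> f /predU1P [->|fr]; first exact: Rmin_r.
exact: Rle_trans (Rmin_l _ _) (le_m f fr).
Qed.

(* Walks with more than [K] edges are longer than a fixed walk [s0], so a
   shortest walk is found among the finitely many edge sequences of size at most [K]. *)
Lemma shortest_walk u v :
  exists2 s, walk u v s & forall s', walk u v s' -> wlen s <= wlen s'.
Proof.
have [s0 w0] := conn u v; have [m m0 le_m] := len_lower_bound.
have [K ltK] := INR_archimed m (wlen s0) m0.
have long s : (K < size s)%nat -> wlen s0 < wlen s.
  move=> lt_Ks; suff : INR (size s) * m <= wlen s.
    have : INR K * m <= INR (size s) * m.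
      by apply: Rmult_le_compat_r; [lra | apply: le_INR; apply/leP; exact: ltnW].
    lra.
  elim: s {lt_Ks} => [|e s IH]; first by rewrite /= Rmult_0_l; lra.
  by rewrite (S_INR (size s)) /=; have := le_m e; lra.
have small_s0 : (size s0 <= K)%nat by rewrite leqNgt; apply/negP => /long; lra.
have [s [_ ws mins]] := @seq_argmin _ (seqs_upto K) (walk u v) wlen
  (ex_intro2 _ _ s0 (mem_seqs_upto small_s0) w0).
exists s => // s' ws'; have [small_s'|/long] := leqP (size s') K.
  exact: mins (mem_seqs_upto small_s') ws'.
by have := mins s0 (mem_seqs_upto small_s0) w0; lra.
Qed.

Lemma dV_spec u v :
  (exists s, walk u v s /\ wlen s = dV u v) /\ (forall s, walk u v s -> dV u v <= wlen s).
Proof.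
apply: (epsilon_spec (inhabits 0) (fun r => (exists s, walk u v s /\ wlen s = r) /\
  (forall s, walk u v s -> r <= wlen s))).
by have [s ws mins] := shortest_walk u v; exists (wlen s); split; first by exists s.
Qed.

Lemma dV_le u v s : walk u v s -> dV u v <= wlen s.
Proof. exact: (proj2 (dV_spec u v)). Qed.

Lemma dV_ge0 u v : 0 <= dV u v.
Proof. by have [[s [_ <-]] _] := dV_spec u v; exact: wlen_ge0. Qed.

Lemma dV_refl v : dV v v = 0.
Proof. by have := dV_le (walk_nil src tgt v); have := dV_ge0 v v; rewrite /=; lra. Qed.

Lemma dV_last_edge u v : u <> v -> exists f w, dV u w + len f <= dV u v /\
  (src f = v /\ tgt f = w \/ tgt f = v /\ src f = w).
Proof.
move=> uv; have [[s [ws <-]] _] := dV_spec u v.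
have s_nil : s <> [::] by move=> s0; subst s; inversion ws.
have [s' [f [-> [[w' tf]|[w' sf]]]]] := walk_rcons_inv ws s_nil; rewrite wlen_rcons.
- by exists f, (src f); split; [have := dV_le w'; lra | right].
- by exists f, (tgt f); split; [have := dV_le w'; lra | left].
Qed.

End ShortestWalks.

(** * Distances on the network *)

Lemma Rmin_eq_or u v : Rmin u v = u \/ Rmin u v = v.
Proof. by rewrite /Rmin; case: Rle_dec; tauto. Qed.

Lemma Rmin4_eq_or a b c d : let m := Rmin (Rmin a b) (Rmin c d) in
  m = a \/ m = b \/ m = c \/ m = d.
Proof.
rewrite /=; case: (Rmin_eq_or (Rmin a b) (Rmin c d)) => ->;
  [case: (Rmin_eq_or a b) | case: (Rmin_eq_or c d)] => ->; tauto.
Qed.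

Section Geodesics.
Variables (V E : finType) (src tgt : E -> V) (len : E -> R).
Hypothesis len_pos : forall e, 0 < len e.
Hypothesis conn : connected src tgt.
Hypothesis no_loop : forall e, src e <> tgt e.

Local Notation dist := (Defs.dist src tgt len).
Local Notation dV := (dV src tgt len).

Definition edge_offset (e : E) (t : R) (u : V) (o : R) : Prop :=
  u = src e /\ o = t \/ u = tgt e /\ o = len e - t.

Lemma edge_offset_ge0 e t u o : 0 <= t <= len e -> edge_offset e t u o -> 0 <= o.
Proof. by move=> ? [[_ ->]|[_ ->]]; lra. Qed.

Lemma dist_PE_PE_le e t f s u o w o' : edge_offset e t u o -> edge_offset f s w o' ->
  dist (PE e t) (PE f s) <= o + dV u w + o'.
Proof.
move=> eu fw; rewrite /Defs.dist; set m := Rmin (Rmin _ _) (Rmin _ _).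
apply: (@Rle_trans _ m); first by case: (e == f); [exact: Rmin_r | lra].
rewrite /m /Rmin; case: eu => [[-> ->]|[-> ->]]; case: fw => [[-> ->]|[-> ->]];
  by do 3 case: Rle_dec; lra.
Qed.

Lemma dist_PE_PE_le_abs e t s : dist (PE e t) (PE e s) <= Rabs (t - s).
Proof. by rewrite /= eqxx; exact: Rmin_l. Qed.

Lemma dist_PE_PV_cases e t v :
  exists u o, edge_offset e t u o /\ dist (PE e t) (PV v) = o + dV u v.
Proof.
rewrite /Defs.dist; case: (Rmin_eq_or (t + dV (src e) v) (len e - t + dV (tgt e) v)) => ->.
- by exists (src e), t; split => //; left.
- by exists (tgt e), (len e - t); split => //; right.
Qed.

Lemma dist_PE_PE_cases e t f s :
  (e = f /\ dist (PE e t) (PE f s) = Rabs (t - s)) \/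
  exists u o w o', [/\ edge_offset e t u o, edge_offset f s w o' &
                      dist (PE e t) (PE f s) = o + dV u w + o'].
Proof.
have offs : forall m, (m = t + dV (src e) (src f) + s \/ m = t + dV (src e) (tgt f) + (len f - s) \/
    m = len e - t + dV (tgt e) (src f) + s \/ m = len e - t + dV (tgt e) (tgt f) + (len f - s)) ->
    exists u o w o', [/\ edge_offset e t u o, edge_offset f s w o' & m = o + dV u w + o'].
  move=> m [->|[->|[->|->]]];
    [exists (src e), t, (src f), s | exists (src e), t, (tgt f), (len f - s)
    | exists (tgt e), (len e - t), (src f), s | exists (tgt e), (len e - t), (tgt f), (len f - s)];
    split => //; by [left | right].
rewrite /Defs.dist; set m := Rmin (Rmin _ _) (Rmin _ _).
have m_cases := offs m (Rmin4_eq_or _ _ _ _).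
case: eqP => [ef|_]; last by right.
by case: (Rmin_eq_or (Rabs (t - s)) m) => ->; [left | right].
Qed.

Lemma dist_PE_PV_small e t v eps : dist (PE e t) (PV v) <= eps -> t <= eps \/ len e - t <= eps.
Proof.
have [u [o [[[_ ->]|[_ ->]] ->]]] := dist_PE_PV_cases e t v;
  have := dV_ge0 len_pos conn u v; lra.
Qed.

Lemma dist_PE_PE_small e t f s eps : 0 <= s <= len f -> dist (PE e t) (PE f s) <= eps ->
  t <= eps \/ len e - t <= eps \/ e = f /\ Rabs (t - s) <= eps.
Proof.
move=> s_in; case: (dist_PE_PE_cases e t f s) => [[-> ->]|[u [o [w [o' [eu fw ->]]]]]].
  by right; right.
have := edge_offset_ge0 s_in fw; have := dV_ge0 len_pos conn u w.
by case: eu => [[_ ->]|[_ ->]]; lra.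
Qed.

Definition point_near (v : V) (f : E) (eps : R) : point V E :=
  if src f == v then PE f eps else PE f (len f - eps).

Lemma shortcut_to_vertex e t v eps : 0 < eps -> eps < dist (PE e t) (PV v) ->
  exists2 f, (src f == v) || (tgt f == v) &
    dist (PE e t) (point_near v f eps) + eps <= dist (PE e t) (PV v).
Proof.
move=> eps0; have [u [o [eu ->]]] := dist_PE_PV_cases e t v.
have [<-|uv] := eqVneq u v.
  rewrite dV_refl // Rplus_0_r; case: eu => [[-> ->]|[-> ->]] far;
    exists e; rewrite /point_near ?eqxx ?orbT //.
    by have := dist_PE_PE_le_abs e t eps; rewrite Rabs_right; lra.
  have -> : (src e == tgt e) = false by apply/eqP; exact: no_loop.
  by have := dist_PE_PE_le_abs e t (len e - eps); rewrite Rabs_left; lra.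
move/eqP: uv => uv _; have [f [w [le_w [[sf tf]|[tf sf]]]]] := dV_last_edge len_pos conn uv.
- exists f; first by rewrite sf eqxx.
  rewrite /point_near sf eqxx.
  have := dist_PE_PE_le eu (or_intror (conj (esym tf) erefl) : edge_offset f eps w _); lra.
- exists f; first by rewrite tf eqxx orbT.
  have -> : point_near v f eps = PE f (len f - eps).
    by rewrite /point_near -tf; have -> : (src f == tgt f) = false by apply/eqP; exact: no_loop.
  have := dist_PE_PE_le eu (or_introl (conj (esym sf) erefl) : edge_offset f (len f - eps) w _).
  lra.
Qed.

Lemma shortcut_to_interior e t f s eps : eps < dist (PE e t) (PE f s) ->
  dist (PE e t) (PE f (s - eps)) + eps <= dist (PE e t) (PE f s) \/
  dist (PE e t) (PE f (s + eps)) + eps <= dist (PE e t) (PE f s).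
Proof.
case: (dist_PE_PE_cases e t f s) => [[<- ->]|[u [o [w [o' [eu fw ->]]]]]] far.
  have [ts|st] := Rle_lt_dec t s; [left | right].
  - rewrite Rabs_left1 in far *; last lra.
    by have := dist_PE_PE_le_abs e t (s - eps); rewrite Rabs_left1; lra.
  - rewrite Rabs_right in far *; last lra.
    by have := dist_PE_PE_le_abs e t (s + eps); rewrite Rabs_right; lra.
case: fw => [[-> ->]|[-> ->]]; [left | right].
- by have := dist_PE_PE_le eu (or_introl (conj erefl erefl) : edge_offset f (s - eps) _ _); lra.
- have := dist_PE_PE_le eu (or_intror (conj erefl erefl) : edge_offset f (s + eps) _ _); lra.
Qed.

End Geodesics.

(** * Market shares *)

Section Shares.
Variables (V E : finType) (src tgt : E -> V) (len : E -> R) (n : nat).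
Implicit Types (x : 'I_n -> point V E) (z y : point V E) (i j k : 'I_n).

Local Notation dist := (Defs.dist src tgt len).
Local Notation dV := (dV src tgt len).
Local Notation closest := (closest src tgt len).
Local Notation share := (share src tgt len).

Lemma closestP x z k : reflect (forall l, dist z (x k) <= dist z (x l)) (closest x z k).
Proof. by apply: (iffP forallP) => le_k l; apply/RlebP. Qed.

Lemma nb_at_gt0 x k : (0 < nb_at x (x k))%nat.
Proof. by apply/card_gt0P; exists k; rewrite inE. Qed.

Lemma mem_closest_locs x z k : closest x z k -> x k \in closest_locs src tgt len x z.
Proof. by move=> ck; rewrite mem_undup; apply: map_f; rewrite mem_filter ck mem_enum. Qed.

Lemma share_closest x z k : closest x z k ->
  share x k z = / INR (size (closest_locs src tgt len x z)) * / INR (nb_at x (x k)).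
Proof. by rewrite /share => ->. Qed.

Lemma share_not_closest x z k : ~~ closest x z k -> share x k z = 0.
Proof. by rewrite /share => /negbTE ->. Qed.

Lemma share_ge0 x k z : 0 <= share x k z.
Proof.
case ck: (closest x z k); last by rewrite share_not_closest ?ck //; lra.
have size_gt0 : (0 < size (closest_locs src tgt len x z))%nat.
  by case: closest_locs (mem_closest_locs ck).
rewrite share_closest //; apply: Rmult_le_pos; apply: Rlt_le; apply: Rinv_0_lt_compat;
  apply: lt_0_INR; apply/ltP; rewrite ?nb_at_gt0 //.
Qed.

Lemma nb_at_mul_share_le1 x k z : INR (nb_at x (x k)) * share x k z <= 1.
Proof.
case ck: (closest x z k); last by rewrite share_not_closest ?ck //; lra.
have size_ge1 : 1 <= INR (size (closest_locs src tgt len x z)).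
  by apply: (le_INR 1); apply/leP; case: closest_locs (mem_closest_locs ck).
have nb_ge1 : 1 <= INR (nb_at x (x k)) by apply: (le_INR 1); apply/leP; exact: nb_at_gt0.
rewrite share_closest // Rmult_comm Rmult_assoc Rinv_l; last lra.
rewrite Rmult_1_r -Rinv_1; apply: Rinv_le_contravar; lra.
Qed.

Lemma share_upd_unique_closest x j y z : (forall k, x k != y) ->
  (forall k, dist z y < dist z (x k)) -> share (upd x j y) j z = 1.
Proof.
move=> free closer; set x' := upd x j y.
have x'j : x' j = y by rewrite /x' /upd eqxx.
have x'k k : k != j -> x' k = x k by move=> kj; rewrite /x' /upd (negbTE kj).
have cj : closest x' z j.
  apply/closestP => l; rewrite x'j; have [->|lj] := eqVneq l j; first by rewrite x'j; lra.
  by rewrite x'k //; have := closer l; lra.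
have ck k : k != j -> closest x' z k = false.
  by move=> kj; apply/closestP => /(_ j); rewrite x'j x'k //; have := closer k; lra.
have locs : perm_eq (closest_locs src tgt len x' z) [:: y].
  apply: uniq_perm; rewrite ?undup_uniq // => a; rewrite mem_undup inE.
  apply/mapP/eqP => [[k] |->]; last by exists j; rewrite ?x'j // mem_filter cj mem_enum.
  by rewrite mem_filter => /andP [+ _] ->; have [->|/ck ->] := eqVneq k j.
have nb1 : nb_at x' (x' j) = 1%nat.
  apply: (eq_card1 (x := j)) => k; rewrite !inE x'j.
  by have [->|kj] := eqVneq k j; rewrite ?x'j ?eqxx // x'k // (negbTE (free k)).
by rewrite share_closest // (perm_size locs) nb1 /= Rinv_1 Rmult_1_r.
Qed.

Lemma dist_PE_minmax_affine e p : minmax_affine (fun t => dist (PE e t) p).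
Proof.
have aff := minmax_affine_of_affine.
case: p => [v|f s]; rewrite /Defs.dist.
  by apply: minmax_affine_min; [apply: (aff 1 (dV (src e) v)) | apply: (aff (-1) (len e + dV (tgt e) v))];
    move=> t; ring.
have m_aff : minmax_affine (fun t =>
    Rmin (Rmin (t + dV (src e) (src f) + s) (t + dV (src e) (tgt f) + (len f - s)))
         (Rmin (len e - t + dV (tgt e) (src f) + s) (len e - t + dV (tgt e) (tgt f) + (len f - s)))).
  do 2 apply: minmax_affine_min.
  - by apply: (aff 1 (dV (src e) (src f) + s)) => t; ring.
  - by apply: (aff 1 (dV (src e) (tgt f) + (len f - s))) => t; ring.
  - by apply: (aff (-1) (len e + dV (tgt e) (src f) + s)) => t; ring.
  - by apply: (aff (-1) (len e + dV (tgt e) (tgt f) + (len f - s))) => t; ring.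
case: (e == f) => /=; last exact: m_aff.
exact: minmax_affine_min (minmax_affine_abs s) m_aff.
Qed.

Lemma pt_on_interior e t : 0 < t < len e -> pt_on src tgt len e t = PE e t.
Proof. by move=> t_in; rewrite /pt_on; do 2 case: Req_EM_T => ?; try lra. Qed.

(* Along an edge, [share x k] only depends on the finitely many comparisons
   between distances to occupied locations, each of which is piecewise constant. *)
Lemma share_integrable x k e : 0 <= len e ->
  integrable (fun t => share x k (pt_on src tgt len e t)) 0 (len e).
Proof.
move=> len_ge0.
pose cmp (jl : 'I_n * 'I_n) t := Rleb (dist (PE e t) (x jl.1)) (dist (PE e t) (x jl.2)).
have [P cmpP] := @piecewise_const_family 0 (len e) _ _ cmp (fun jl =>
  Rleb_minmax_affine_piecewise_const _ _ (dist_PE_minmax_affine e _) (dist_PE_minmax_affine e _)).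
pose of_cmp (b : 'I_n * 'I_n -> bool) :=
  if [forall l, b (k, l)] then
    / INR (size (undup [seq x j | j <- enum 'I_n & [forall l, b (j, l)]])) * / INR (nb_at x (x k))
  else 0.
apply: (piecewise_const_integrable len_ge0 (P := P)).
apply: piecewise_const_ext (piecewise_const_map of_cmp cmpP) => t t_in.
by rewrite pt_on_interior.
Qed.

End Shares.

(** * Deviating next to a balanced player *)

Definition window (c eps t : R) : R := if Rleb (Rabs (t - c)) eps then 1 else 0.

Lemma window_ge0 c eps t : 0 <= window c eps t.
Proof. by rewrite /window; case: Rleb; lra. Qed.

Lemma window_le1 c eps t : window c eps t <= 1.
Proof. by rewrite /window; case: Rleb; lra. Qed.

Lemma window_eq1 c eps t : Rabs (t - c) <= eps -> window c eps t = 1.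
Proof. by rewrite /window => /RlebP ->. Qed.

Lemma window_integrable c eps L : 0 <= L -> integrable (window c eps) 0 L.
Proof.
move=> L0; have [P cmpP] := Rleb_minmax_affine_piecewise_const 0 L (minmax_affine_abs c)
  (minmax_affine_affine 0 eps).
apply: (piecewise_const_integrable L0 (P := P)).
apply: piecewise_const_ext (piecewise_const_map (fun b : bool => if b then 1 else 0) cmpP) => t _.
by rewrite /window Rmult_0_l Rplus_0_l.
Qed.

Lemma RInt_window_le c eps L : 0 < eps -> 0 <= L -> RInt (window c eps) 0 L <= 2 * eps.
Proof.
move=> eps0 L0; have := @RInt_le_window (window c eps) 0 L (c - eps) (c + eps) 1.
have -> : 1 * (c + eps - (c - eps)) = 2 * eps by ring.
apply=> //; [lra | lra | exact: window_integrable | by move=> *; exact: window_le1 |].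
move=> t _ far; rewrite /window; case: RlebP => [|_]; last lra.
by rewrite /Rabs; case: Rcase_abs; lra.
Qed.

Section Deviation.
Variables (V E : finType) (src tgt : E -> V) (len : E -> R) (n : nat).
Variables (x : 'I_n -> point V E) (i j : 'I_n).
Hypothesis len_pos : forall e, 0 < len e.
Hypothesis no_loop : forall e, src e <> tgt e.
Hypothesis conn : connected src tgt.
Hypothesis x_valid : valid_profile len x.

Local Notation dist := (Defs.dist src tgt len).
Local Notation share := (share src tgt len).
Local Notation payoff := (payoff src tgt len).

Definition deviations (eps : R) : seq (point V E) :=
  match x i with
  | PV v => [seq point_near src len v f eps | f <- enum E & (src f == v) || (tgt f == v)]
  | PE e0 s0 => [:: PE e0 (s0 - eps); PE e0 (s0 + eps)]
  end.

Definition admissible (eps : R) : Prop :=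
  [/\ 0 < eps, forall f, eps < len f,
      forall e0 s0, x i = PE e0 s0 -> eps < s0 /\ eps < len e0 - s0
    & forall k, x k \notin deviations eps].

(* Parameter of [x i] on [e] when [x i] is interior to [e]; the junk value [0]
   otherwise is harmless, the window around [0] being counted anyway. *)
Definition param_on (e : E) : R :=
  match x i with PE e0 s0 => if e == e0 then s0 else 0 | PV _ => 0 end.

Lemma size_deviations eps : size (deviations eps) = degree src tgt (x i).
Proof.
rewrite /deviations /degree; case: (x i) => [v|e0 s0] //.
rewrite /vdeg size_map cardE /enum_mem -filter_predI; congr size.
by apply: eq_filter => e /=; rewrite !inE andbT.
Qed.

Lemma deviations_valid eps y : admissible eps -> y \in deviations eps -> valid_point len y.
Proof.
case=> eps0 lt_len lt_s0 _; rewrite /deviations.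
case: (x i) lt_s0 => [v _|e0 s0 /(_ e0 s0 erefl) [? ?]].
- by case/mapP => f _ ->; rewrite /point_near; case: (src f == v) => /=; have := lt_len f; lra.
- by rewrite !inE => /orP [] /eqP -> /=; lra.
Qed.

Lemma deviations_shortcut eps e t : 0 < eps -> eps < dist (PE e t) (x i) ->
  exists2 y, y \in deviations eps & dist (PE e t) y + eps <= dist (PE e t) (x i).
Proof.
rewrite /deviations => eps0; case: (x i) => [v|e0 s0] far.
- have [f fv short] := shortcut_to_vertex len_pos conn no_loop eps0 far.
  by exists (point_near src len v f eps) => //; apply: map_f; rewrite mem_filter fv mem_enum.
- case: (shortcut_to_interior far) => short.
  + by exists (PE e0 (s0 - eps)); rewrite ?inE ?eqxx.
  + by exists (PE e0 (s0 + eps)); rewrite ?inE ?eqxx ?orbT.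
Qed.

Lemma near_location eps e t : 0 < t < len e -> dist (PE e t) (x i) <= eps ->
  1 <= window 0 eps t + window (len e) eps t + window (param_on e) eps t.
Proof.
move=> t_in near.
have w0 := window_ge0 0 eps t; have wL := window_ge0 (len e) eps t.
have wc := window_ge0 (param_on e) eps t.
have : t <= eps \/ len e - t <= eps \/ Rabs (t - param_on e) <= eps.
  rewrite /param_on; case: (x i) near (x_valid i) => [v near _|e0 s0 near /= s0_in].
    by have := dist_PE_PV_small len_pos conn near; tauto.
  have [|[|[<- ?]]] := dist_PE_PE_small len_pos conn (conj (Rlt_le _ _ (proj1 s0_in))
    (Rlt_le _ _ (proj2 s0_in))) near; rewrite ?eqxx; tauto.
case=> [near0|[nearL|/window_eq1 ->]]; last lra.
- by rewrite window_eq1 ?Rminus_0_r ?Rabs_right; lra.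
- by rewrite (window_eq1 (c := len e)) ?Rabs_left1; lra.
Qed.

Lemma share_le_deviations eps e t : admissible eps -> balanced src tgt x i -> 0 < t < len e ->
  INR (degree src tgt (x i)) * share x i (PE e t) <=
  \big[Rplus/0]_(y <- deviations eps) share (upd x j y) j (PE e t) +
  (window 0 eps t + window (len e) eps t + window (param_on e) eps t).
Proof.
move=> adm bal t_in; have [eps0 _ _ free] := adm.
have sum_ge0 : 0 <= \big[Rplus/0]_(y <- deviations eps) share (upd x j y) j (PE e t).
  by apply: sumR_ge0 => y; exact: share_ge0.
have w0 := window_ge0 0 eps t; have wL := window_ge0 (len e) eps t.
have wc := window_ge0 (param_on e) eps t.
case ci: (closest src tgt len x (PE e t) i).
  2: by rewrite share_not_closest ?ci // Rmult_0_r; lra.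
suff : 1 <= \big[Rplus/0]_(y <- deviations eps) share (upd x j y) j (PE e t) +
  (window 0 eps t + window (len e) eps t + window (param_on e) eps t).
  by rewrite -bal; have := nb_at_mul_share_le1 src tgt len x i (PE e t); lra.
have [far|] := Rlt_le_dec eps (dist (PE e t) (x i)); last by move/near_location => /(_ t_in); lra.
have [y dev_y short] := deviations_shortcut eps0 far.
have -> : 1 = share (upd x j y) j (PE e t).
  apply/esym/share_upd_unique_closest => [k|k]; first by apply/eqP => xky; move: (free k); rewrite xky dev_y.
  by move/closestP: ci => /(_ k); lra.
suff : share (upd x j y) j (PE e t) <=
       \big[Rplus/0]_(y <- deviations eps) share (upd x j y) j (PE e t) by lra.
by apply: (@sumR_ge_mem _ _ (fun y => share (upd x j y) j (PE e t))) => // y'; exact: share_ge0.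
Qed.

Lemma RInt_share_le_deviations eps e : admissible eps -> balanced src tgt x i ->
  INR (degree src tgt (x i)) * RInt (fun t => share x i (pt_on src tgt len e t)) 0 (len e) <=
  \big[Rplus/0]_(y <- deviations eps) RInt (fun t => share (upd x j y) j (pt_on src tgt len e t)) 0 (len e)
  + 6 * eps.
Proof.
move=> adm bal; have [eps0 _ _ _] := adm; have L0 : 0 <= len e by have := len_pos e; lra.
have Ish x' k : integrable (fun t => share x' k (pt_on src tgt len e t)) 0 (len e).
  exact: share_integrable.
pose W t := window 0 eps t + window (len e) eps t + window (param_on e) eps t.
have IW : integrable W 0 (len e).
  by rewrite /W; repeat apply: integrable_plus; exact: window_integrable.
have RW : RInt W 0 (len e) <= 6 * eps.
  rewrite /W !RInt_plus; try by [exact: window_integrable | apply: integrable_plus; exact: window_integrable].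
  by have := RInt_window_le 0 eps0 L0; have := RInt_window_le (len e) eps0 L0;
    have := RInt_window_le (param_on e) eps0 L0; lra.
rewrite -RInt_scal // -RInt_sum //.
apply: Rle_trans (@RInt_le _ (fun t => \big[Rplus/0]_(y <- deviations eps)
  share (upd x j y) j (pt_on src tgt len e t) + W t) _ _ L0 _ _ _) _.
- exact: integrable_scal.
- by apply: integrable_plus IW; exact: integrable_sum.
- by move=> t t_in; rewrite !pt_on_interior //; exact: share_le_deviations.
- by rewrite RInt_plus ?RInt_sum //; [lra | exact: integrable_sum].
Qed.

Lemma payoff_le_deviations eps : admissible eps -> balanced src tgt x i ->
  INR (degree src tgt (x i)) * payoff x i <=
  \big[Rplus/0]_(y <- deviations eps) payoff (upd x j y) j + \big[Rplus/0]_(e : E) (6 * eps).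
Proof.
move=> adm bal; rewrite /payoff big_distrr /= (exchange_big _ (deviations eps)) /= -big_split /=.
by apply: sumR_le => e _; exact: RInt_share_le_deviations.
Qed.

Lemma balanced_payoff_le eps : admissible eps -> balanced src tgt x i ->
  (forall y, valid_point len y -> payoff (upd x j y) j <= payoff x j) ->
  INR (degree src tgt (x i)) * payoff x i <=
  INR (degree src tgt (x i)) * payoff x j + \big[Rplus/0]_(e : E) (6 * eps).
Proof.
move=> adm bal no_dev; apply: Rle_trans (payoff_le_deviations adm bal) _.
apply: Rplus_le_compat_r; rewrite -(size_deviations eps) -sumR_const.
rewrite big_seq [X in _ <= X]big_seq; apply: sumR_le => y dev_y.
exact/no_dev/(deviations_valid adm).
Qed.

End Deviation.

Lemma In_mem (T : eqType) (a : T) (s : seq T) : a \in s -> List.In a s.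
Proof. by elim: s => [//|b s IH] /predU1P [->|/IH]; [left | right]. Qed.

Lemma small_pos_below (l : list R) eta : 0 < eta ->
  exists eps, [/\ 0 < eps, eps <= eta & forall b, List.In b l -> b <= 0 \/ eps < b].
Proof.
elim: l => [|b l IH] eta0; first by exists eta; split => //; lra.
have [eps [eps0 le_eta small]] := IH eta0.
have [b0|bpos] := Rle_lt_dec b 0.
  by exists eps; split => // c [<-|/small]; [left|].
exists (Rmin eps (b / 2)); split.
- by apply: Rmin_glb_lt => //; lra.
- exact: Rle_trans (Rmin_l _ _) le_eta.
- move=> c [<-|/small [|lt_c]]; [right | by left | right].
  + by have := Rmin_r eps (b / 2); lra.
  + exact: Rle_lt_trans (Rmin_l _ _) lt_c.
Qed.

Section Admissible.
Variables (V E : finType) (src tgt : E -> V) (len : E -> R) (n : nat).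
Variables (x : 'I_n -> point V E) (i : 'I_n).
Hypothesis len_pos : forall e, 0 < len e.
Hypothesis x_valid : valid_profile len x.

(* [eps] must stay below the finitely many lengths and parameters below, and
   avoid the values for which a deviation point would already be occupied. *)
Lemma admissible_exists eta : 0 < eta ->
  exists2 eps, eps <= eta & admissible src tgt len x i eps.
Proof.
move=> eta0; pose c := if x i is PE _ s0 then s0 else 0.
pose own := if x i is PE e0 s0 then [:: s0; len e0 - s0] else [::].
pose others k := if x k is PE f s then [:: s; len f - s; s - c; c - s] else [::].
have [eps [eps0 le_eta small]] :=
  small_pos_below (own ++ List.map len (enum E) ++ List.flat_map others (enum 'I_n))%list eta0.
have in_others k b : List.In b (others k) -> b <= 0 \/ eps < b.
  move=> kb; apply: small; apply: List.in_or_app; right; apply: List.in_or_app; right.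
  by apply/List.in_flat_map; exists k; split => //; apply: In_mem; rewrite mem_enum.
have ne_eps k b : List.In b (others k) -> b <> eps by move=> /in_others; lra.
exists eps => //; split => //.
- move=> f; have [|//] : len f <= 0 \/ eps < len f; last by have := len_pos f; lra.
  apply: small; apply: List.in_or_app; right; apply: List.in_or_app; left.
  by apply: List.in_map; apply: In_mem; rewrite mem_enum.
- move=> e0 s0 xi; have := x_valid i; rewrite xi /= => s0_in.
  have own_small b : List.In b own -> b <= 0 \/ eps < b.
    by move=> ob; apply: small; apply: List.in_or_app; left.
  have := own_small s0; have := own_small (len e0 - s0).
  by rewrite /own xi /=; intuition lra.
- move=> k; apply/negP; rewrite /deviations.
  have c_s0 e0 s0 : x i = PE e0 s0 -> c = s0 by rewrite /c => ->.
  case xi: (x i) => [v|e0 s0].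
  + case/mapP => f _; rewrite /point_near; case: (src f == v) => xk.
    * by apply: (ne_eps k eps) => //; rewrite /others /= xk; left.
    * apply: (ne_eps k (len f - (len f - eps))); last ring.
      by rewrite /others /= xk; right; left.
  + rewrite !inE => /orP [] /eqP xk.
    * apply: (ne_eps k (c - (s0 - eps))); last by rewrite (c_s0 _ _ xi); ring.
      by rewrite /others /= xk; do 3 right; left.
    * apply: (ne_eps k ((s0 + eps) - c)); last by rewrite (c_s0 _ _ xi); ring.
      by rewrite /others /= xk; do 2 right; left.
Qed.

End Admissible.

Lemma le_of_le_plus_eps a b : (forall eta, 0 < eta -> a <= b + eta) -> a <= b.
Proof.
move=> le_ab; apply: Rnot_lt_le => lt_ba.
by have := le_ab ((a - b) / 2) ltac:(lra); lra.
Qed.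

Lemma balanced_payoff_le_eta (V E : finType) (src tgt : E -> V) (len : E -> R) (n : nat)
    (x : 'I_n -> point V E) (i j : 'I_n) :
  (forall e, 0 < len e) -> (forall e, src e <> tgt e) -> connected src tgt ->
  valid_profile len x -> balanced src tgt x i ->
  (forall y, valid_point len y -> payoff src tgt len (upd x j y) j <= payoff src tgt len x j) ->
  forall eta, 0 < eta ->
  INR (degree src tgt (x i)) * payoff src tgt len x i <=
  INR (degree src tgt (x i)) * payoff src tgt len x j + eta.
Proof.
move=> len_pos no_loop conn x_valid bal no_dev eta eta0.
set C := INR (size (index_enum E)); have C0 : 0 <= C := pos_INR _.
pose eta' := eta / (6 * (C + 1)); have eta'0 : 0 < eta' by apply: Rdiv_lt_0_compat; lra.
have [eps le_eta' adm] := admissible_exists src tgt i len_pos x_valid eta'0.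
have [eps0 _ _ _] := adm.
have := balanced_payoff_le len_pos no_loop conn x_valid adm bal no_dev.
rewrite sumR_const -/C.
have : 6 * (C + 1) * eps <= eta.
  have -> : eta = 6 * (C + 1) * eta' by rewrite /eta'; field; lra.
  by apply: Rmult_le_compat_l => //; lra.
nra.
Qed.

Local Close Scope R_scope.
Theorem mainTheorem7 (V E : finType) (src tgt : E -> V) (len : E -> R)
  (n : nat) (x : 'I_n -> point V E) (i : 'I_n) :
  network src tgt len ->
  (2 <= n)%N ->
  nash src tgt len x ->
  balanced src tgt x i ->
  forall j : 'I_n, (payoff src tgt len x i <= payoff src tgt len x j)%R.
Proof.
Local Open Scope R_scope.
move=> [len_pos [no_loop [_ [conn _]]]] _ [x_valid no_dev] bal j.
have d_ge1 : 1 <= INR (degree src tgt (x i)).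
  by rewrite -bal; apply: (le_INR 1); apply/leP; exact: nb_at_gt0.
apply: (Rmult_le_reg_l (INR (degree src tgt (x i)))); first lra.
apply: le_of_le_plus_eps.
exact: balanced_payoff_le_eta len_pos no_loop conn x_valid bal (no_dev j).
Qed.
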